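(* For the Type A model with cut-off $\varepsilon_0=\mu$, the expected number of links $$L_g=\frac{N(N-1)}{2}\int_0^\mu\!\!\int_0^\mu\frac{\rho_g(\varepsilon)\rho_g(\varepsilon')\,d\varepsilon\,d\varepsilon'}{e^{\beta(\varepsilon+\varepsilon'-\mu)}+1}$$ equals $$L_g=\frac{N(N-1)}{8\sinh^2(\alpha\beta\mu/2)}\Big(e^{\alpha\beta\mu}\,F(-e^{\beta\mu})-2F(-1)+e^{-\alpha\beta\mu}F(-e^{-\beta\mu})\Big),$$ where $F(w)={}_3F_2(1,\alpha,\alpha;1+\alpha,1+\alpha;w)$.
   Context: $N\ge2$ is the number of nodes, $\beta=1/T>0$ the inverse temperature, $\mu>0$ the chemical potential, $\alpha>0$ a parameter (in the paper $\alpha=\beta_c(\gamma-1)/\beta$). The Type A density of hidden energies with cut-off $\mu$ is $\rho_g(\varepsilon)=\frac{\alpha\beta e^{\alpha\beta(\varepsilon-\mu/2)}}{2\sinh(\alpha\beta\mu/2)}$ on $[0,\mu]$. ${}_3F_2$ denotes the generalized hypergeometric function (analytically continued to arguments in $(-\infty,0]$). *)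

From Stdlib Require Import Reals.
From Coquelicot Require Import Coquelicot.
Open Scope R_scope.

Fixpoint pochhammer (a : R) (k : nat) : R :=
  match k with
  | O => 1
  | S k' => pochhammer a k' * (a + INR k')
  end.

Definition hyp3F2_coeff (a1 a2 a3 b1 b2 : R) (k : nat) : R :=
  pochhammer a1 k * pochhammer a2 k * pochhammer a3 k /
  (pochhammer b1 k * pochhammer b2 k * pochhammer 1 k (* = k! *)).

Definition real_analytic_below (b : R) (G : R -> R) : Prop :=
  forall x0, x0 < b ->
    exists r : R, 0 < r /\ exists c : nat -> R,
      forall x, Rabs (x - x0) < r -> is_series (fun n => c n * (x - x0) ^ n) (G x).

(* G is the analytic continuation (restricted to the real axis (-oo,1)) of the
   3F2 power series, which converges on (-1,1).  Such a G exists and is unique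
   (identity theorem), so it coincides with 3F2 on (-oo,0]. *)
Definition is_hyp3F2 (a1 a2 a3 b1 b2 : R) (G : R -> R) : Prop :=
  real_analytic_below 1 G /\
  forall w, -1 < w < 1 -> is_series (fun k => hyp3F2_coeff a1 a2 a3 b1 b2 k * w ^ k) (G w).

Definition rho_g (alpha beta mu eps : R) : R :=
  alpha * beta * exp (alpha * beta * (eps - mu / 2)) / (2 * sinh (alpha * beta * mu / 2)).

Definition L_g (N : nat) (alpha beta mu : R) : R :=
  INR N * (INR N - 1) / 2 *
  RInt (fun e => RInt (fun e' =>
          rho_g alpha beta mu e * rho_g alpha beta mu e' /
          (exp (beta * (e + e' - mu)) + 1)) 0 mu) 0 mu.

From Stdlib Require Import Reals Lra.
From Coquelicot Require Import Coquelicot.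
Open Scope R_scope.

(* Write F for 3F2(1, a, a; 1 + a, 1 + a; .), a = alpha, whose series is
   sum_k a^2 w^k / (a + k)^2.  With theta = w d/dw, termwise (theta + a)^2 F
   = sum_k a^2 w^k = a^2 / (1 - w) on (-1, 1); since F is analytic on
   (-oo, 1), an identity theorem for real-analytic functions on a half-line
   extends this Euler equation to all w < 1.  Substituting w = -e^t, the
   function K(t) = e^{a t} F(-e^t) satisfies K'' = a^2 e^{a t} / (e^t + 1).

   The integrand of L_g depends only on s = e + e', and equals
   beta^2 K''(beta (s - mu)) / (4 sinh^2(alpha beta mu / 2)); a second-order
   fundamental theorem of calculus for double integrals of functions of
   x + y then evaluates L_g through K(beta mu), K(0) and K(-beta mu). *)

Definition ps_expansion (G : R -> R) (x0 r : R) (c : nat -> R) : Prop :=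
  forall h, Rabs h < r -> is_pseries c h (G (x0 + h)).

Lemma real_analytic_below_expansion (b : R) (G : R -> R) :
  real_analytic_below b G <->
  forall x0, x0 < b -> exists r c, 0 < r /\ ps_expansion G x0 r c.
Proof.
  split.
  - intros HA x0 Hx. destruct (HA x0 Hx) as [r [Hr [c Hc]]].
    exists r, c. split; [exact Hr|]. intros h Hh. apply is_pseries_R.
    specialize (Hc (x0 + h)). replace (x0 + h - x0) with h in Hc by ring. auto.
  - intros HA x0 Hx. destruct (HA x0 Hx) as [r [c [Hr Hc]]].
    exists r. split; [exact Hr|]. exists c. intros x Hxr.
    apply is_pseries_R. replace x with (x0 + (x - x0)) at 2 by ring. auto.
Qed.

Lemma ps_expansion_shrink G x0 r r' c :
  r' <= r -> ps_expansion G x0 r c -> ps_expansion G x0 r' c.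
Proof. intros Hle H h Hh. apply H. lra. Qed.

Lemma radius_of_convergent_pseries (c : nat -> R) (r : R) :
  (forall h, Rabs h < r -> ex_pseries c h) ->
  forall h, Rabs h < r -> Rbar_lt (Rabs h) (CV_radius c).
Proof.
  intros Hc h Hh.
  destruct (Rbar_lt_le_dec (Rabs h) (CV_radius c)) as [|Hle]; [assumption|].
  exfalso. set (y := (Rabs h + r) / 2).
  assert (Hy : Rabs h < Rabs y < r).
  { unfold y. pose proof (Rabs_pos h). rewrite (Rabs_pos_eq ((Rabs h + r) / 2)); lra. }
  apply (CV_disk_outside c y).
  - eapply Rbar_le_lt_trans; [exact Hle|]. simpl; lra.
  - destruct (Hc y (proj2 Hy)) as [l Hl].
    apply ex_series_lim_0. exists l. now apply is_pseries_R.
Qed.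

Lemma ps_expansion_radius G x0 r c : ps_expansion G x0 r c ->
  forall h, Rabs h < r -> Rbar_lt (Rabs h) (CV_radius c).
Proof.
  intros H. apply radius_of_convergent_pseries. intros h Hh. eexists. now apply H.
Qed.

Lemma ps_expansion_value G x0 r c : ps_expansion G x0 r c ->
  forall h, Rabs h < r -> G (x0 + h) = PSeries c h.
Proof. intros H h Hh. symmetry. apply is_pseries_unique. now apply H. Qed.

Lemma ps_expansion_is_derive G x0 r c : ps_expansion G x0 r c ->
  forall h, Rabs h < r -> is_derive G (x0 + h) (PSeries (PS_derive c) h).
Proof.
  intros H h Hh.
  apply is_derive_ext_loc with (f := fun y => PSeries c (y - x0)).
  - assert (Hd : 0 < r - Rabs h) by lra.
    exists (mkposreal _ Hd). intros y Hy. cbn in Hy.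
    unfold AbsRing_ball, abs, minus, plus, opp in Hy; simpl in Hy.
    replace y with (x0 + (y - x0)) at 2 by ring.
    symmetry. apply (ps_expansion_value G x0 r c H).
    replace (y - x0) with ((y + - (x0 + h)) + h) by ring.
    eapply Rle_lt_trans; [apply Rabs_triang|]. lra.
  - replace (PSeries (PS_derive c) h) with (scal 1 (PSeries (PS_derive c) h))
      by (unfold scal; simpl; unfold mult; simpl; ring).
    apply (is_derive_comp (PSeries c) (fun y => y - x0)).
    + replace (x0 + h - x0) with h by ring.
      apply is_derive_PSeries. eapply ps_expansion_radius; eauto.
    + auto_derive; auto; ring.
Qed.

Lemma ps_expansion_Derive G x0 r c : ps_expansion G x0 r c ->
  ps_expansion (Derive G) x0 r (PS_derive c).
Proof.
  intros H h Hh.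
  rewrite (is_derive_unique _ _ _ (ps_expansion_is_derive G x0 r c H h Hh)).
  apply PSeries_correct, ex_pseries_derive. eapply ps_expansion_radius; eauto.
Qed.

Lemma continuous_vanishing_right (f : R -> R) (r : R) : 0 < r ->
  continuity_pt f 0 -> (forall h, 0 < h < r -> f h = 0) -> f 0 = 0.
Proof.
  intros Hr Hc Hz.
  destruct (Req_dec (f 0) 0) as [|Hn]; [assumption|]. exfalso.
  destruct (Hc _ (Rabs_pos_lt _ Hn)) as [d [Hd Hclose]].
  set (x := Rmin d r / 2).
  assert (Hx : 0 < x < r /\ x < d).
  { unfold x. pose proof (Rmin_l d r); pose proof (Rmin_r d r).
    pose proof (Rmin_pos d r Hd Hr). lra. }
  specialize (Hclose x). cbn in Hclose. unfold R_dist, D_x, no_cond in Hclose.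
  rewrite (Hz x), Rminus_0_l, Rabs_Ropp in Hclose by lra.
  rewrite Rminus_0_r, Rabs_pos_eq in Hclose by lra.
  apply (Rlt_irrefl (Rabs (f 0))), Hclose.
  split; [split; [exact I|apply Rlt_not_eq; lra]|lra].
Qed.

(* A power series vanishing on (0, r), inside its disc of convergence, has
   only zero coefficients: peel off one coefficient at a time. *)
Lemma PSeries_vanishing_right (c : nat -> R) (r : R) : 0 < r ->
  (forall h, Rabs h < r -> Rbar_lt (Rabs h) (CV_radius c)) ->
  (forall h, 0 < h < r -> PSeries c h = 0) -> forall n, c n = 0.
Proof.
  intros Hr Hrad Hz n. revert c Hrad Hz.
  assert (Hc0 : forall c, (forall h, Rabs h < r -> Rbar_lt (Rabs h) (CV_radius c)) ->
                 (forall h, 0 < h < r -> PSeries c h = 0) -> c 0%nat = 0).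
  { intros c Hrad Hz. rewrite <- PSeries_0.
    apply (continuous_vanishing_right _ r Hr); [|exact Hz].
    apply PSeries_continuity, Hrad. rewrite Rabs_R0; exact Hr. }
  induction n as [|n IH]; intros c Hrad Hz; [now apply Hc0|].
  apply (IH (PS_decr_1 c)).
  - intros h Hh. rewrite CV_radius_decr_1. now apply Hrad.
  - intros h Hh.
    assert (Hex : ex_pseries c h) by (apply CV_radius_inside, Hrad; rewrite Rabs_pos_eq; lra).
    pose proof (PSeries_decr_1 c h Hex) as Hdecr.
    rewrite Hz, (Hc0 c Hrad Hz) in Hdecr by exact Hh.
    apply Rmult_eq_reg_l with h; lra.
Qed.

(* The
   supremum of the points where it does not vanish would be a point around
   which its local expansion vanishes, a contradiction. *)
Lemma identity_theorem (a b : R) (G : R -> R) : a < b ->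
  real_analytic_below b G -> (forall x, a < x < b -> G x = 0) ->
  forall x, x < b -> G x = 0.
Proof.
  intros Hab HA Hzero x1 Hx1.
  destruct (Rlt_or_le a x1) as [Hl|Hle]; [apply Hzero; lra|].
  destruct (Req_dec (G x1) 0) as [|Hn]; [assumption|]. exfalso.
  set (E := fun y => x1 <= y <= a /\ G y <> 0).
  assert (Hbound : bound E) by (exists a; intros y [Hy _]; lra).
  assert (Hne : exists y, E y) by (exists x1; split; [lra|exact Hn]).
  destruct (completeness E Hbound Hne) as [s [Hub Hlub]].
  assert (Hs : x1 <= s <= a).
  { split; [apply Hub; split; [lra|exact Hn]|]. apply Hlub. intros y [Hy _]; lra. }
  assert (Hright : forall y, s < y < b -> G y = 0).
  { intros y Hy. destruct (Rlt_or_le a y); [apply Hzero; lra|].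
    destruct (Req_dec (G y) 0) as [|Gy]; [assumption|].
    assert (y <= s) by (apply Hub; split; [lra|exact Gy]). lra. }
  destruct (proj1 (real_analytic_below_expansion b G) HA s ltac:(lra))
    as [r0 [c [Hr0 Hexp0]]].
  set (r := Rmin r0 (b - s)).
  assert (Hr : 0 < r /\ r <= r0 /\ r <= b - s).
  { unfold r. split; [apply Rmin_pos; lra|split; [apply Rmin_l|apply Rmin_r]]. }
  pose proof (ps_expansion_shrink G s r0 r c ltac:(lra) Hexp0) as Hexp.
  assert (Hc : forall n, c n = 0).
  { apply (PSeries_vanishing_right c r); [lra|exact (ps_expansion_radius _ _ _ _ Hexp)|].
    intros h Hh. rewrite <- (ps_expansion_value _ _ _ _ Hexp h) by (rewrite Rabs_pos_eq; lra).
    apply Hright; lra. }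
  assert (Hnear : forall h, Rabs h < r -> G (s + h) = 0).
  { intros h Hh. rewrite (ps_expansion_value _ _ _ _ Hexp h Hh).
    rewrite (PSeries_ext _ (fun _ => 0) h Hc). apply PSeries_const_0. }
  assert (s <= s - r / 2); [|lra].
  apply Hlub. intros y [Hy Gy]. destruct (Rle_or_lt y (s - r / 2)) as [|Hgt]; [assumption|].
  exfalso. assert (y <= s) by (apply Hub; split; assumption).
  apply Gy. replace y with (s + (y - s)) by ring. apply Hnear.
  rewrite Rabs_left1; lra.
Qed.

Definition geom_coeff (x0 : R) (n : nat) : R := / (1 - x0) ^ (S n).

Lemma geom_expansion (x0 : R) : x0 < 1 ->
  ps_expansion (fun w => / (1 - w)) x0 (1 - x0) (geom_coeff x0).
Proof.
  intros Hx h Hh. apply is_pseries_R.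
  assert (Hq : Rabs (h / (1 - x0)) < 1).
  { unfold Rdiv. rewrite Rabs_mult, Rabs_inv, (Rabs_pos_eq (1 - x0)) by lra.
    apply Rmult_lt_reg_r with (1 - x0); [lra|].
    rewrite Rmult_assoc, Rinv_l by lra. lra. }
  assert (Hn : 1 - (x0 + h) <> 0) by (apply Rabs_def2 in Hh; lra).
  replace (/ (1 - (x0 + h))) with (/ (1 - x0) * / (1 - h / (1 - x0))) by (field; lra).
  eapply is_series_ext; [|exact (is_series_scal_l _ _ _ (is_series_geom _ Hq))].
  intros n. unfold geom_coeff, scal; simpl; unfold mult; simpl.
  unfold Rdiv. rewrite Rpow_mult_distr, pow_inv.
  field. split; [apply pow_nonzero|]; lra.
Qed.

(* The Euler operator (theta + a)^2 = w^2 D^2 + (1 + 2a) w D + a^2, with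
   theta = w D; F will satisfy (theta + a)^2 F = a^2 / (1 - w). *)
Definition euler_operator (al : R) (F : R -> R) (w : R) : R :=
  w ^ 2 * Derive (Derive F) w + (1 + 2 * al) * w * Derive F w + al ^ 2 * F w.

Definition euler_defect (al : R) (F : R -> R) (w : R) : R :=
  euler_operator al F w - al ^ 2 / (1 - w).

(* Coefficients of [euler_defect al F] about x0 when [F] has coefficients [c],
   using w = x0 + h, w^2 = x0^2 + 2 x0 h + h^2. *)
Definition euler_defect_coeff (al x0 : R) (c : nat -> R) : nat -> R :=
  let c1 := PS_derive c in let c2 := PS_derive c1 in
  PS_plus (PS_plus (PS_plus (PS_scal (x0 ^ 2) c2)
                            (PS_plus (PS_scal (2 * x0) (PS_incr_1 c2)) (PS_incr_1 (PS_incr_1 c2))))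
                   (PS_scal (1 + 2 * al) (PS_plus (PS_scal x0 c1) (PS_incr_1 c1))))
          (PS_plus (PS_scal (al ^ 2) c) (PS_scal (- al ^ 2) (geom_coeff x0))).

Lemma euler_defect_expansion al F x0 r c : x0 < 1 -> r <= 1 - x0 ->
  ps_expansion F x0 r c -> ps_expansion (euler_defect al F) x0 r (euler_defect_coeff al x0 c).
Proof.
  intros Hx Hr H0 h Hh.
  pose proof (ps_expansion_Derive _ _ _ _ H0) as H1.
  pose proof (ps_expansion_Derive _ _ _ _ H1) as H2.
  specialize (H0 h Hh). specialize (H1 h Hh). specialize (H2 h Hh).
  pose proof (geom_expansion x0 Hx h ltac:(lra)) as Hg.
  assert (Hm : forall a : R, mult h a = mult a h) by (intros; apply Rmult_comm).
  cbv beta in Hg.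
  refine (eq_ind _ (is_pseries _ h) _ _ _).
  - unfold euler_defect_coeff.
    apply is_pseries_plus; [apply is_pseries_plus|apply is_pseries_plus].
    + apply is_pseries_plus.
      * apply is_pseries_scal; [apply Hm|exact H2].
      * apply is_pseries_plus.
        -- apply is_pseries_scal; [apply Hm|]. apply is_pseries_incr_1, H2.
        -- apply is_pseries_incr_1, is_pseries_incr_1, H2.
    + apply is_pseries_scal; [apply Hm|]. apply is_pseries_plus.
      * apply is_pseries_scal; [apply Hm|exact H1].
      * apply is_pseries_incr_1, H1.
    + apply is_pseries_scal; [apply Hm|exact H0].
    + apply is_pseries_scal; [apply Hm|exact Hg].
  - unfold euler_defect, euler_operator, plus, scal; simpl; unfold mult; simpl.
    assert (1 - (x0 + h) <> 0) by (apply Rabs_def2 in Hh; lra).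
    field. assumption.
Qed.

Lemma pochhammer_pos (b : R) (k : nat) : 0 < b -> 0 < pochhammer b k.
Proof.
  intros Hb. induction k as [|k IH]; simpl; [lra|].
  apply Rmult_lt_0_compat; [exact IH|]. pose proof (pos_INR k); lra.
Qed.

Lemma pochhammer_shift (a : R) (k : nat) :
  pochhammer (1 + a) k * a = pochhammer a k * (a + INR k).
Proof.
  induction k as [|k IH]; simpl pochhammer; [simpl; ring|].
  rewrite S_INR.
  replace (pochhammer (1 + a) k * (1 + a + INR k) * a)
    with (pochhammer (1 + a) k * a * (1 + a + INR k)) by ring.
  rewrite IH. ring.
Qed.

Lemma hyp3F2_coeff_closed_form (a : R) (k : nat) : 0 < a ->
  hyp3F2_coeff 1 a a (1 + a) (1 + a) k = a ^ 2 / (a + INR k) ^ 2.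
Proof.
  intros Ha. unfold hyp3F2_coeff.
  pose proof (pochhammer_pos 1 k Rlt_0_1). pose proof (pochhammer_pos a k Ha).
  pose proof (pos_INR k).
  assert (Hq : pochhammer (1 + a) k = pochhammer a k * (a + INR k) / a).
  { rewrite <- pochhammer_shift. field. lra. }
  rewrite Hq. field. repeat split; lra.
Qed.

(* Termwise, (theta + a)^2 maps a^2 w^k / (a + k)^2 to a^2 w^k, the k-th
   term of a^2 / (1 - w): the defect has zero coefficients about 0. *)
Lemma euler_defect_coeff_hyp3F2 (al : R) (n : nat) : 0 < al ->
  euler_defect_coeff al 0 (hyp3F2_coeff 1 al al (1 + al) (1 + al)) n = 0.
Proof.
  intros Hal. unfold euler_defect_coeff, PS_plus, PS_scal, PS_incr_1, PS_derive, geom_coeff.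
  unfold plus, scal, zero; simpl; unfold mult; simpl.
  destruct n as [|[|m]]; cbn -[INR];
    rewrite ?hyp3F2_coeff_closed_form by assumption; rewrite ?S_INR; simpl INR.
  - field; lra.
  - field; lra.
  - change (match m with 0%nat => 1 | S _ => INR m + 1 end) with (INR (S m)).
    rewrite S_INR, Rminus_0_r, pow1. pose proof (pos_INR m). field; lra.
Qed.

(* The analytic continuation F of 3F2(1, a, a; 1 + a, 1 + a; .) satisfies
   (theta + a)^2 F = a^2 / (1 - w) on all of (-oo, 1): on (-1, 1) by
   comparing coefficients, beyond by the identity theorem. *)
Lemma hyp3F2_euler_equation (al : R) (F : R -> R) : 0 < al ->
  is_hyp3F2 1 al al (1 + al) (1 + al) F ->
  forall w, w < 1 -> euler_operator al F w = al ^ 2 / (1 - w).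
Proof.
  intros Hal [HA Hser] w Hw.
  enough (Hd : euler_defect al F w = 0) by (unfold euler_defect in Hd; lra).
  apply (identity_theorem (-1) 1); [lra| |  |exact Hw].
  - apply real_analytic_below_expansion. intros x0 Hx.
    destruct (proj1 (real_analytic_below_expansion 1 F) HA x0 Hx) as [r [c [Hr Hexp]]].
    exists (Rmin r (1 - x0)), (euler_defect_coeff al x0 c).
    split; [apply Rmin_pos; lra|].
    apply euler_defect_expansion; [exact Hx|apply Rmin_r|].
    apply ps_expansion_shrink with r; [apply Rmin_l|exact Hexp].
  - intros x Hx.
    assert (Hexp : ps_expansion F 0 1 (hyp3F2_coeff 1 al al (1 + al) (1 + al))).
    { intros h Hh. apply is_pseries_R. rewrite Rplus_0_l. apply Hser.
      apply Rabs_def2 in Hh; lra. }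
    pose proof (euler_defect_expansion al F 0 1 _ ltac:(lra) ltac:(lra) Hexp) as Hd.
    replace x with (0 + x) by ring.
    rewrite (ps_expansion_value _ _ _ _ Hd x) by (apply Rabs_def1; lra).
    rewrite (PSeries_ext _ (fun _ => 0) x (fun n => euler_defect_coeff_hyp3F2 al n Hal)).
    apply PSeries_const_0.
Qed.

Lemma analytic_derivable2 (b : R) (F : R -> R) : real_analytic_below b F ->
  forall w, w < b -> ex_derive F w /\ ex_derive (Derive F) w.
Proof.
  intros HA w Hw.
  destruct (proj1 (real_analytic_below_expansion b F) HA w Hw) as [r [c [Hr Hexp]]].
  assert (H0 : Rabs 0 < r) by (rewrite Rabs_R0; exact Hr).
  pose proof (ps_expansion_is_derive _ _ _ _ Hexp 0 H0) as D1.
  pose proof (ps_expansion_is_derive _ _ _ _ (ps_expansion_Derive _ _ _ _ Hexp) 0 H0) as D2.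
  rewrite Rplus_0_r in D1, D2.
  split; eexists; eassumption.
Qed.

(* Kernel a^2 e^{a t} / (e^t + 1) of the link integral in the variable
   t = beta (e + e' - mu), and its first and second antiderivatives
   built from the hypergeometric function F. *)
Definition fermi_kernel (al t : R) : R := al ^ 2 * exp (al * t) / (exp t + 1).

Definition kernel_prim1 (al : R) (F : R -> R) (t : R) : R :=
  exp (al * t) * (al * F (- exp t) - exp t * Derive F (- exp t)).

Definition kernel_prim2 (al : R) (F : R -> R) (t : R) : R :=
  exp (al * t) * F (- exp t).

Section Antiderivatives.
Variables (al : R) (F : R -> R).
Hypothesis Hal : 0 < al.
Hypothesis HF : is_hyp3F2 1 al al (1 + al) (1 + al) F.

Lemma kernel_prim2_derive (t : R) : is_derive (kernel_prim2 al F) t (kernel_prim1 al F t).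
Proof.
  destruct (analytic_derivable2 1 F (proj1 HF) (- exp t)) as [D1 _];
    [pose proof (exp_pos t); lra|].
  unfold kernel_prim2, kernel_prim1. auto_derive; [exact D1|].
  change (Derive (fun x => F x)) with (Derive F). ring.
Qed.

(* Differentiating once more produces exactly the Euler operator applied to
   F at w = -e^t, which the hypergeometric equation turns into the kernel. *)
Lemma kernel_prim1_derive (t : R) : is_derive (kernel_prim1 al F) t (fermi_kernel al t).
Proof.
  set (w := - exp t).
  assert (Hw : w < 1) by (unfold w; pose proof (exp_pos t); lra).
  destruct (analytic_derivable2 1 F (proj1 HF) w Hw) as [D1 D2].
  pose proof (hyp3F2_euler_equation al F Hal HF w Hw) as Heq.
  unfold kernel_prim1, fermi_kernel. auto_derive; [split; [exact D1|split; [exact D2|exact I]]|].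
  change (Derive (fun x => F x)) with (Derive F).
  change (Derive (fun x => Derive F x)) with (Derive (Derive F)).
  fold w. replace (exp t + 1) with (1 - w) by (unfold w; ring).
  replace (exp t) with (- w) by (unfold w; ring).
  unfold euler_operator in Heq.
  transitivity (exp (al * t) * (w ^ 2 * Derive (Derive F) w
                  + (1 + 2 * al) * w * Derive F w + al ^ 2 * F w)); [ring|].
  rewrite Heq. field. lra.
Qed.

End Antiderivatives.

Lemma is_derive_comp_slope1 (f g : R -> R) (x df : R) :
  is_derive g x 1 -> is_derive f (g x) df -> is_derive (fun y => f (g y)) x df.
Proof.
  intros Hg Hf. pose proof (is_derive_comp f g x df 1 Hf Hg) as H.
  change (scal 1 df) with (1 * df) in H. rewrite Rmult_1_l in H. exact H.
Qed.

Lemma RInt_RInt_of_sum (P P1 p : R -> R) (a b c d : R) :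
  (forall s, is_derive P s (P1 s)) -> (forall s, is_derive P1 s (p s)) ->
  (forall s, continuous p s) ->
  RInt (fun x => RInt (fun y => p (x + y)) c d) a b
  = P (b + d) - P (b + c) - P (a + d) + P (a + c).
Proof.
  intros HP HP1 Hp.
  assert (Htr : forall (f df : R -> R) (k x : R), (forall s, is_derive f s (df s)) ->
            is_derive (fun y => f (y + k)) x (df (x + k)) /\
            is_derive (fun y => f (k + y)) x (df (k + x))).
  { intros f df k x Hf. split; apply (is_derive_comp_slope1 f); auto;
      auto_derive; auto; ring. }
  assert (Hinner : forall x, RInt (fun y => p (x + y)) c d = P1 (x + d) - P1 (x + c)).
  { intro x. apply is_RInt_unique, (is_RInt_derive (fun y => P1 (x + y))).
    - intros y _. apply Htr, HP1.
    - intros y _.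
      apply (@continuous_comp R_UniformSpace R_UniformSpace R_UniformSpace
               (fun y => x + y) p); [|apply Hp].
      apply (@continuous_plus R_UniformSpace R_AbsRing R_NormedModule);
        [apply continuous_const|apply continuous_id]. }
  rewrite (RInt_ext _ (fun x => P1 (x + d) - P1 (x + c))) by (intros; apply Hinner).
  replace (P (b + d) - P (b + c) - P (a + d) + P (a + c))
    with ((P (b + d) - P (b + c)) - (P (a + d) - P (a + c))) by ring.
  apply is_RInt_unique, (is_RInt_derive (fun x => P (x + d) - P (x + c))).
  - intros x _.
    exact (is_derive_minus _ _ x _ _ (proj1 (Htr P P1 d x HP)) (proj1 (Htr P P1 c x HP))).
  - intros x _.
    assert (Hd : ex_derive (fun x => P1 (x + d) - P1 (x + c)) x).
    { eexists.
      exact (is_derive_minus _ _ x _ _ (proj1 (Htr P1 p d x HP1)) (proj1 (Htr P1 p c x HP1))). }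
    exact (ex_derive_continuous _ x Hd).
Qed.

Lemma link_integrand (al be mu e e' : R) : sinh (al * be * mu / 2) <> 0 ->
  rho_g al be mu e * rho_g al be mu e' / (exp (be * (e + e' - mu)) + 1)
  = / (4 * sinh (al * be * mu / 2) ^ 2) * be * be * fermi_kernel al (be * (e + e' - mu)).
Proof.
  intros Hs. unfold rho_g, fermi_kernel.
  replace (al * (be * (e + e' - mu)))
    with (al * be * (e - mu / 2) + al * be * (e' - mu / 2)) by field.
  rewrite exp_plus. pose proof (exp_pos (be * (e + e' - mu))). field. lra.
Qed.

Lemma is_derive_scaled (f df : R -> R) (k be m : R) :
  (forall t, is_derive f t (df t)) ->
  forall s, is_derive (fun s => k * f (be * (s - m))) s (k * be * df (be * (s - m))).
Proof.
  intros Hf s. rewrite Rmult_assoc. apply is_derive_scal.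
  apply (is_derive_comp f (fun s => be * (s - m)) s _ be); [apply Hf|].
  auto_derive; auto; ring.
Qed.

Theorem mainTheorem4 (N : nat) (beta mu alpha : R) (F : R -> R) :
  (2 <= N)%nat -> 0 < beta -> 0 < mu -> 0 < alpha ->
  is_hyp3F2 1 alpha alpha (1 + alpha) (1 + alpha) F ->
  L_g N alpha beta mu =
    INR N * (INR N - 1) / (8 * (sinh (alpha * beta * mu / 2)) ^ 2) *
    (exp (alpha * beta * mu) * F (- exp (beta * mu))
     - 2 * F (-1)
     + exp (- (alpha * beta * mu)) * F (- exp (- (beta * mu)))).
Proof.
  intros _ Hbe Hmu Hal HF.
  assert (Hs : 0 < sinh (alpha * beta * mu / 2)).
  { rewrite <- sinh_0. apply sinh_lt.
    assert (0 < alpha * beta * mu) by (repeat apply Rmult_lt_0_compat; lra). lra. }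
  set (k := / (4 * sinh (alpha * beta * mu / 2) ^ 2)).
  set (P t := k * kernel_prim2 alpha F (beta * (t - mu))).
  set (P1 t := k * beta * kernel_prim1 alpha F (beta * (t - mu))).
  set (p t := k * beta * beta * fermi_kernel alpha (beta * (t - mu))).
  assert (HP : forall t, is_derive P t (P1 t))
    by (apply is_derive_scaled, kernel_prim2_derive; assumption).
  assert (HP1 : forall t, is_derive P1 t (p t))
    by (apply is_derive_scaled, kernel_prim1_derive; assumption).
  assert (Hp : forall t, continuous p t).
  { intro t. apply (@ex_derive_continuous R_AbsRing R_NormedModule).
    unfold p, fermi_kernel. auto_derive.
    apply Rgt_not_eq. pose proof (exp_pos (beta * (t + - mu))). lra. }
  unfold L_g.
  rewrite (RInt_ext _ (fun e => RInt (fun e' => p (e + e')) 0 mu))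
    by (intros e _; apply RInt_ext; intros e' _; apply link_integrand, Rgt_not_eq, Hs).
  rewrite (RInt_RInt_of_sum P P1 p 0 mu 0 mu HP HP1 Hp).
  unfold P, k, kernel_prim2.
  replace (beta * (mu + mu - mu)) with (beta * mu) by ring.
  replace (beta * (mu + 0 - mu)) with 0 by ring.
  replace (beta * (0 + mu - mu)) with 0 by ring.
  replace (beta * (0 + 0 - mu)) with (- (beta * mu)) by ring.
  rewrite Rmult_0_r, exp_0.
  replace (alpha * (beta * mu)) with (alpha * beta * mu) by ring.
  replace (alpha * - (beta * mu)) with (- (alpha * beta * mu)) by ring.
  replace (- (1)) with (-1) by ring.
  field. apply Rgt_not_eq, Hs.
Qed.
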